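(* Identify distributions on $S\times S$ with matrices in $\mathbb{R}^{S\times S}$. Let $\Phi$ be the set of $S\times S$ permutation matrices, $I$ the identity matrix, and $\mathrm{co}\,\Phi$ the convex hull of $\Phi$. Then $\mathcal{M}(m)=\big(\mu_0-I+\mathrm{co}\,\Phi\big)\cap\mathbb{R}_+^{S\times S}$, where $\mu_0-I+\mathrm{co}\,\Phi=\{\mu_0-I+J:J\in\mathrm{co}\,\Phi\}$.
   Context: $S$ is a finite set and $m\in\Delta(S)$. $\mathcal{M}(m)$ is the set of probability distributions on $S\times S$ both of whose marginals equal $m$, and $\mu_0\in\mathcal{M}(m)$ is defined by $\mu_0(s,s)=m(s)$ and $\mu_0(s,t)=0$ for $s\neq t$. A permutation matrix is a square matrix with entries in $\{0,1\}$ having exactly one entry equal to $1$ in each row and each column. *)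

From HB Require Import structures.
From mathcomp Require Import all_boot all_order all_algebra.
From mathcomp Require Import reals.
Set Implicit Arguments. Unset Strict Implicit. Unset Printing Implicit Defensive.
Import Order.TTheory GRing.Theory Num.Theory.
Local Open Scope ring_scope.

(* Distributions on S x S are identified with matrices, i.e. functions
   S -> S -> R (rows indexed by the first coordinate). *)

Section Defs.
Variables (R : realType) (S : finType).

Definition is_distr (m : S -> R) : Prop :=
  (forall s, 0 <= m s) /\ \sum_(s : S) m s = 1.

Definition is_distr2 (mu : S -> S -> R) : Prop :=
  (forall s t, 0 <= mu s t) /\ \sum_(s : S) \sum_(t : S) mu s t = 1.

Definition in_M (m : S -> R) (mu : S -> S -> R) : Prop :=
  is_distr2 mu /\
  (forall s, \sum_(t : S) mu s t = m s) /\
  (forall t, \sum_(s : S) mu s t = m t).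

Definition mu0 (m : S -> R) : S -> S -> R :=
  fun s t => if s == t then m s else 0.

Definition idm : S -> S -> R := fun s t => if s == t then 1 else 0.

Definition is_perm_matrix (J : S -> S -> R) : Prop :=
  (forall s t, J s t = 0 \/ J s t = 1) /\
  (forall s, exists! t, J s t = 1) /\
  (forall t, exists! s, J s t = 1).

Definition in_conv_hull (P : (S -> S -> R) -> Prop) (X : S -> S -> R) : Prop :=
  exists (n : nat) (w : 'I_n -> R) (A : 'I_n -> S -> S -> R),
    (forall i, 0 <= w i) /\ \sum_(i < n) w i = 1 /\
    (forall i, P (A i)) /\
    (forall s t, X s t = \sum_(i < n) w i * A i s t).

End Defs.

(* Writing [mu = mu0 - I + J], the marginals of [mu] are those of [mu0] exactly
   when every row and column of [J] sums to 1, and on the diagonal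
   [J s s = mu s s - m s + 1 >= 0]; so [mu] is a nonnegative coupling iff
   [mu >= 0] and [J] is doubly stochastic.  The theorem thus reduces to
   Birkhoff-von Neumann, proved by induction on the support: Hall's condition
   holds on the support by double counting, the resulting perfect matching is a
   permutation inside the support, and subtracting its smallest entry times
   the permutation matrix shrinks the support. *)

From mathcomp Require Import all_boot all_order all_algebra.
From mathcomp Require Import reals zify ring lra.
Import Order.TTheory GRing.Theory Num.Theory.
Set Implicit Arguments.
Unset Strict Implicit.
Unset Printing Implicit Defensive.

Section HallMarriage.
Variable T : finType.
Implicit Types (e : rel T) (A B C N : {set T}) (f g : T -> T).

Definition neighbours e B : {set T} := [set y | [exists x in B, e x y]].

Lemma neighboursP e B y :
  reflect (exists2 x, x \in B & e x y) (y \in neighbours e B).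
Proof. by rewrite inE; apply: (iffP exists_inP). Qed.

Definition hall_condition e A :=
  forall B, B \subset A -> #|B| <= #|neighbours e B|.

Definition matching e A f :=
  {in A &, injective f} /\ {in A, forall x, e x (f x)}.

Definition avoiding e N : rel T := [rel x y | e x y && (y \notin N)].

Lemma hall_conditionS e A B :
  B \subset A -> hall_condition e A -> hall_condition e B.
Proof. by move=> sBA hallA C sCB; apply: hallA (subset_trans sCB sBA). Qed.

Lemma matching_neighbours e A f x :
  matching e A f -> x \in A -> f x \in neighbours e A.
Proof. by move=> [_ eAf] xA; apply/neighboursP; exists x; rewrite ?eAf. Qed.

Lemma matching_glue e A B N f g :
  matching e B f -> {in B, forall x, f x \in N} ->
  matching (avoiding e N) (A :\: B) g ->
  matching e A (fun x => if x \in B then f x else g x).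
Proof.
move=> [injf ef] fN [injg eg].
have gN x : x \in A -> x \notin B -> g x \notin N.
  by move=> xA xB; have /eg/andP[] : x \in A :\: B by rewrite inE xB xA.
split=> [x y xA yA|x xA].
  case xB: (x \in B); case yB: (y \in B) => fxy.
  - exact: injf.
  - by move: (gN y yA (negbT yB)); rewrite -fxy fN.
  - by move: (gN x xA (negbT xB)); rewrite fxy fN.
  - by apply: injg; rewrite // inE ?xB ?yB.
case xB: (x \in B); first exact: ef.
by have /eg/andP[] : x \in A :\: B by rewrite inE xB xA.
Qed.

(* A tight set [B] uses up all of its neighbours, so the rest of [A] must be
   matched outside them; Hall's condition survives because
   [|C| + |B| <= |N(C :|: B)| <= |N'(C)| + |N(B)|]. *)
Lemma hall_condition_tight e A B :
  B \subset A -> hall_condition e A -> #|neighbours e B| <= #|B| ->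
  hall_condition (avoiding e (neighbours e B)) (A :\: B).
Proof.
move=> sBA hallA tightB C sC.
have dCB : [disjoint C & B].
  apply: disjointWl sC _; rewrite disjoint_subset.
  by apply/subsetP => x; rewrite !inE => /andP[].
have sCBA : C :|: B \subset A.
  by rewrite subUset sBA (subset_trans sC) ?subsetDl.
have sN : neighbours e (C :|: B) \subset
          neighbours (avoiding e (neighbours e B)) C :|: neighbours e B.
  apply/subsetP => y /neighboursP[x /setUP[xC|xB] exy]; rewrite in_setU.
    have [_|yN] := boolP (y \in neighbours e B); rewrite ?orbT // orbF.
    by apply/neighboursP; exists x; rewrite // /avoiding /= exy.
  by apply/orP; right; apply/neighboursP; exists x.
have := hallA _ sCBA; have := subset_leq_card sN.
have [_] := leq_card_setU C B; rewrite dCB => /eqP cardCB.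
have [cardN _] := leq_card_setU
  (neighbours (avoiding e (neighbours e B)) C) (neighbours e B).
by move: cardN tightB; lia.
Qed.

Lemma hall_condition_slack e A a b :
  (forall C, C \subset A -> C != set0 -> C != A -> #|C| < #|neighbours e C|) ->
  a \in A -> hall_condition (avoiding e [set b]) (A :\: [set a]).
Proof.
move=> slackA aA C sC; have [->|nC0] := eqVneq C set0; first by rewrite cards0.
have sCA : C \subset A by apply: subset_trans sC (subsetDl _ _).
have nCA : C != A.
  by apply: contraTneq sC => ->; apply/subsetPn; exists a; rewrite ?inE ?eqxx.
have sN : neighbours e C \subset b |: neighbours (avoiding e [set b]) C.
  apply/subsetP => y /neighboursP[x xC exy]; rewrite in_setU1.
  have [//|ynb] := eqVneq y b; apply/neighboursP; exists x => //.
  by rewrite /avoiding /= exy inE ynb.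
have := subset_leq_card sN; rewrite cardsU1; have := slackA C sCA nC0 nCA; lia.
Qed.

Theorem hall_marriage e A : hall_condition e A -> exists f, matching e A f.
Proof.
elim: {A}_.+1 {-2}A (ltnSn #|A|) e => // n IH A ltAn e hallA.
have [tight|slack] := boolP [exists B : {set T},
  [&& B \subset A, B != set0, B != A & #|neighbours e B| <= #|B|]].
  have /existsP[B /and4P[sBA nB0 nBA tightB]] := tight.
  have ltBA : #|B| < #|A| by rewrite proper_card // properEneq nBA.
  have [f mf] := IH B (leq_trans ltBA ltAn) e (hall_conditionS sBA hallA).
  have [|g mg] := IH (A :\: B) _ _ (hall_condition_tight sBA hallA tightB).
    by rewrite cardsDS //; move: nB0; rewrite -card_gt0; lia.
  by exists (fun x => if x \in B then f x else g x);
    apply: matching_glue mg => // x; apply: matching_neighbours.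
have {}slack C : C \subset A -> C != set0 -> C != A -> #|C| < #|neighbours e C|.
  move=> sCA nC0 nCA; rewrite ltnNge; apply: contraNN slack => tightC.
  by apply/existsP; exists C; rewrite sCA nC0 nCA.
have [A0|[a aA]] := set_0Vmem A; first by exists id; split=> x; rewrite A0 inE.
have /card_gt0P[b /neighboursP[_ /set1P-> eab]] : 0 < #|neighbours e [set a]|.
  by have := hallA [set a]; rewrite sub1set aA cards1; apply.
have [|g mg] := IH (A :\: [set a]) _ _ (hall_condition_slack b slack aA).
  by move: ltAn; rewrite (cardsD1 a A) aA setDE; lia.
exists (fun x => if x \in [set a] then b else g x); apply: matching_glue mg.
  by split=> [x y /set1P-> /set1P->|x /set1P->].
by move=> x _; apply: set11.
Qed.

End HallMarriage.

Local Open Scope ring_scope.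

Section BirkhoffVonNeumann.
Variables (R : realType) (S : finType).
Implicit Types (A P : S -> S -> R) (f : S -> S).

Definition transpose A : S -> S -> R := fun s t => A t s.

Definition perm_matrix_of f : S -> S -> R :=
  fun s t => if f s == t then 1 else 0.

Definition subr_perm_matrix A e f : S -> S -> R :=
  fun s t => A s t - e * perm_matrix_of f s t.

Lemma is_perm_matrix_tr P : is_perm_matrix P -> is_perm_matrix (transpose P).
Proof. by case=> P01 [rowP colP]; split=> [s t|]; [apply: P01|split]. Qed.

Lemma perm_matrix_row_sum P : is_perm_matrix P -> forall s, \sum_t P s t = 1.
Proof.
case=> P01 [rowP _] s; have [t [Pst1 uniq_t]] := rowP s.
rewrite (bigD1 t) //= Pst1 big1 ?addr0 // => t' nt't.
by case: (P01 s t') => // /uniq_t t'E; rewrite t'E eqxx in nt't.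
Qed.

Lemma perm_matrix_col_sum P : is_perm_matrix P -> forall t, \sum_s P s t = 1.
Proof. by move=> /is_perm_matrix_tr; apply: perm_matrix_row_sum. Qed.

Lemma is_perm_matrix_of f : injective f -> is_perm_matrix (perm_matrix_of f).
Proof.
move=> injf; rewrite /perm_matrix_of; split; last split.
- by move=> s t; case: ifP; [right|left].
- move=> s; exists (f s); split=> [|t]; first by rewrite eqxx.
  by case: eqP => // _ /eqP; rewrite eq_sym oner_eq0.
- move=> t; have /codomP[s ->] := inj_card_onto injf (leqnn _) t.
  exists s; split=> [|s']; first by rewrite eqxx.
  by case: eqP => [/injf //|_ /eqP]; rewrite eq_sym oner_eq0.
Qed.

(* [in_conv_hull is_perm_matrix A] is, by definition, [perm_combination 1 A]. *)
Definition perm_combination c A :=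
  exists n (w : 'I_n -> R) (P : 'I_n -> S -> S -> R),
    (forall i, 0 <= w i) /\ \sum_(i < n) w i = c /\
    (forall i, is_perm_matrix (P i)) /\
    (forall s t, A s t = \sum_(i < n) w i * P i s t).

Lemma perm_combination_tr c A :
  perm_combination c A -> perm_combination c (transpose A).
Proof.
move=> [n [w [P [w0 [sumw [permP AE]]]]]].
exists n, w, (fun i => transpose (P i)); do 2!split=> //.
by split=> [i|s t]; [apply: is_perm_matrix_tr | apply: AE].
Qed.

Lemma perm_combination_row_sum c A :
  perm_combination c A -> forall s, \sum_t A s t = c.
Proof.
move=> [n [w [P [_ [<- [permP AE]]]]]] s.
under eq_bigr do rewrite AE; rewrite exchange_big /=.
by apply: eq_bigr => i _; rewrite -mulr_sumr perm_matrix_row_sum ?mulr1.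
Qed.

Lemma perm_combination_col_sum c A :
  perm_combination c A -> forall t, \sum_s A s t = c.
Proof. by move=> /perm_combination_tr; apply: perm_combination_row_sum. Qed.

Lemma perm_combination0 A : (forall s t, 0 <= A s t) ->
  (forall s, \sum_t A s t = 0) -> perm_combination 0 A.
Proof.
move=> A0 rowA; exists 0%N, (fun _ => 0), (fun _ _ _ => 0).
split=> [[]//|]; split; first by rewrite big_ord0.
split=> [[]//|s t]; rewrite big_ord0.
by apply: (psumr_eq0P (fun t _ => A0 s t) (rowA s)).
Qed.

Lemma perm_combination_cons c e f A : injective f -> 0 <= e ->
  perm_combination (c - e) (subr_perm_matrix A e f) ->
  perm_combination c A.
Proof.
move=> injf e0 [n [w [P [w0 [sumw [permP AE]]]]]].
exists n.+1, (fun i => if unlift ord0 i is Some j then w j else e),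
  (fun i => if unlift ord0 i is Some j then P j else perm_matrix_of f).
split; first by move=> i; case: (unlift ord0 i).
rewrite big_ord_recl unlift_none; under eq_bigr do rewrite liftK.
split; first by rewrite sumw addrC subrK.
split=> [i|s t].
  by case: (unlift ord0 i) => [j|]; [apply: permP | apply: is_perm_matrix_of].
rewrite big_ord_recl unlift_none; under eq_bigr do rewrite liftK.
by rewrite -AE addrC subrK.
Qed.

Definition support A : {set S * S} := [set p | 0 < A p.1 p.2].

(* Double counting: the mass [c |B|] of the rows in [B] lies in the columns
   of [neighbours B], which carry total mass [c |neighbours B|]. *)
Lemma hall_condition_positive c A : 0 < c -> (forall s t, 0 <= A s t) ->
  (forall s, \sum_t A s t = c) -> (forall t, \sum_s A s t = c) ->
  hall_condition [rel s t | 0 < A s t] [set: S].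
Proof.
move=> c0 A0 rowA colA B _; set N := neighbours _ B.
have massB : \sum_(s in B) c = \sum_(s in B) \sum_(t in N) A s t.
  apply: eq_bigr => s sB.
  rewrite -(rowA s) (bigID (mem N)) /= [X in _ + X]big1 ?addr0 // => t tN.
  apply/eqP; rewrite eq_le A0 leNgt andbT.
  by apply: contra tN => Ast; apply/neighboursP; exists s.
rewrite -(ler_pMn2l c0) -!sumr_const massB exchange_big /=.
apply: ler_sum => t _; rewrite -(colA t).
by rewrite [leRHS](bigID (mem B)) /= lerDl sumr_ge0.
Qed.

Lemma exists_positive_matching c A : 0 < c -> (forall s t, 0 <= A s t) ->
  (forall s, \sum_t A s t = c) -> (forall t, \sum_s A s t = c) ->
  exists2 f, injective f & forall s, 0 < A s (f s).
Proof.
move=> c0 A0 rowA colA.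
have [f [injf posf]] := hall_marriage (hall_condition_positive c0 A0 rowA colA).
by exists f => [x y|s]; [apply: injf; rewrite inE | apply: posf; rewrite inE].
Qed.

Lemma peel_perm_matrix A f (s0 : S) : (forall s t, 0 <= A s t) ->
  (forall s, 0 < A s (f s)) ->
  exists e, [/\ 0 < e,
    (forall s t, 0 <= subr_perm_matrix A e f s t) &
    (#|support (subr_perm_matrix A e f)| < #|support A|)%N].
Proof.
move=> A0 posf.
have [s1 _ minf] := @arg_minP _ _ _ s0 predT (fun s => A s (f s)) isT.
have pm0 s t : 0 <= perm_matrix_of f s t by rewrite /perm_matrix_of; case: ifP.
exists (A s1 (f s1)); split=> // [s t|].
  rewrite /subr_perm_matrix /perm_matrix_of.
  case: eqP => [<-|_]; last by rewrite mulr0 subr0.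
  by rewrite mulr1 subr_ge0 minf.
apply: proper_card; apply/properP; split.
  apply/subsetP => -[s t]; rewrite !inE /subr_perm_matrix /=.
  by move=> /lt_le_trans; apply; rewrite gerBl mulr_ge0 // ltW.
exists (s1, f s1); rewrite !inE /subr_perm_matrix /perm_matrix_of //=.
by rewrite eqxx mulr1 subrr ltxx.
Qed.

Theorem birkhoff_von_neumann c A : 0 <= c -> (forall s t, 0 <= A s t) ->
  (forall s, \sum_t A s t = c) -> (forall t, \sum_s A s t = c) ->
  perm_combination c A.
Proof.
elim: {A}_.+1 {-2}A (ltnSn #|support A|) c => // n IH A ltAn c c0 A0.
have [-> rowA _|cn0 rowA colA] := eqVneq c 0; first exact: perm_combination0.
have [s0 _|S0] := pickP (@predT S); last first.
  exists 1%N, (fun _ => c), (fun _ => perm_matrix_of id).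
  split=> //; split; first by rewrite big_ord1.
  by split=> [_|s]; [apply/is_perm_matrix_of/inj_id | have := S0 s].
have cpos : 0 < c by rewrite lt_def cn0.
have [f injf posf] := exists_positive_matching cpos A0 rowA colA.
have [e [epos A'0 ltA'A]] := peel_perm_matrix s0 A0 posf.
have permf := is_perm_matrix_of injf.
have rowA' s : \sum_t subr_perm_matrix A e f s t = c - e.
  by rewrite sumrB -mulr_sumr (perm_matrix_row_sum permf) mulr1 rowA.
have colA' t : \sum_s subr_perm_matrix A e f s t = c - e.
  by rewrite sumrB -mulr_sumr (perm_matrix_col_sum permf) mulr1 colA.
have c'0 : 0 <= c - e by rewrite -(rowA' s0) sumr_ge0.
apply: (perm_combination_cons injf (ltW epos)).
exact: IH _ (leq_trans ltA'A ltAn) _ c'0 A'0 rowA' colA'.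
Qed.

End BirkhoffVonNeumann.

Section Couplings.
Variables (R : realType) (S : finType) (m : S -> R).

Lemma distr_le1 s : is_distr m -> m s <= 1.
Proof. by case=> m_ge0 <-; rewrite (bigD1 s) //= lerDl sumr_ge0. Qed.

Lemma mu0_row_sum s : \sum_t mu0 m s t = m s.
Proof. by rewrite -big_mkcond (big_pred1 s) // => t; apply: eq_sym. Qed.

Lemma mu0_col_sum t : \sum_s mu0 m s t = m t.
Proof. by rewrite -big_mkcond big_pred1_eq. Qed.

End Couplings.

Theorem lemma5 (R : realType) (S : finType) (m : S -> R) (hm : is_distr m)
    (mu : S -> S -> R) :
  in_M m mu <->
  ((exists J : S -> S -> R,
      in_conv_hull (@is_perm_matrix R S) J /\
      (forall s t, mu s t = mu0 m s t - @idm R S s t + J s t)) /\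
   (forall s t, 0 <= mu s t)).
Proof.
split.
  case=> [[mu_ge0 _] [rowmu colmu]]; split=> //.
  exists (fun s t => mu s t - mu0 m s t + @idm R S s t).
  split; last by move=> s t; ring.
  apply: birkhoff_von_neumann => // [s t|s|t].
  - rewrite /mu0 /idm; case: eqP => [<-|_]; last by rewrite subr0 addr0.
    by have := distr_le1 s hm; have := mu_ge0 s s; lra.
  - rewrite big_split sumrB /= rowmu mu0_row_sum.
    by rewrite (mu0_row_sum (fun=> 1)) subrr add0r.
  - rewrite big_split sumrB /= colmu mu0_col_sum.
    by rewrite (mu0_col_sum (fun=> 1)) subrr add0r.
case=> [[J [convJ muE]] mu_ge0].
have rowmu s : \sum_t mu s t = m s.
  rewrite (eq_bigr _ (fun t _ => muE s t)) big_split /= sumrB mu0_row_sum.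
  by rewrite (mu0_row_sum (fun=> 1)) (perm_combination_row_sum convJ) subrK.
have colmu t : \sum_s mu s t = m t.
  rewrite (eq_bigr _ (fun s _ => muE s t)) big_split /= sumrB mu0_col_sum.
  by rewrite (mu0_col_sum (fun=> 1)) (perm_combination_col_sum convJ) subrK.
do 2!split=> //; case: hm => _ <-; exact: eq_bigr.
Qed.
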